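(* Let $R$ be a commutative Noetherian ring with unity, $\lambda$ a length function on $R$-modules, $S=R[x_1,\dots,x_k]$, $A$ an $S$-module and $\bar A=(A_i)_{i\in\mathbb{N}}$ a $\lambda$-inert filtration of $A$. Then there is a polynomial $\tilde q_{\bar A}(t)\in\mathbb{R}[t]$ of degree at most $k-1$ such that $\lambda(\tilde A_n)=\tilde q_{\bar A}(n)$ for all sufficiently large $n\in\mathbb{N}$.
   Context: A length function on $R$-modules is a function $\lambda$ from $R$-modules to $\mathbb{R}_{\ge0}\cup\{\infty\}$ with $\lambda(0)=0$, invariant under isomorphism, additive on short exact sequences, and with $\lambda(N)=\sup\{\lambda(N'):N'\le N$ finitely generated$\}$. A filtration of $A$ is an increasing sequence of $R$-submodules $A_0\le A_1\le\dots$ with $\bigcup A_i=A$ and $x_jA_i\subseteq A_{i+1}$ for all $i,j$. Put $\tilde A_i=A_{i+1}/A_i$ and let $\tilde{\mathcal B}(\bar A)=\bigoplus_{i\in\mathbb{N}}\tilde A_i$, the graded $S$-module in which each $x_j$ acts with degree $1$ (induced maps $\tilde A_i\to\tilde A_{i+1}$). The filtration is $\lambda$-inert if $\tilde{\mathcal B}(\bar A)$ is a Noetherian $S$-module and there is $n_0$ with $\lambda(\tilde A_n)<\infty$ for all $n\ge n_0$. *)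

From HB Require Import structures.
From mathcomp Require Import all_boot all_algebra generic_quotient.
From mathcomp Require Import classical_sets boolp reals constructive_ereal ereal.
From mathcomp Require Import Rstruct.

Set Implicit Arguments.
Unset Strict Implicit.
Unset Printing Implicit Defensive.

Import GRing.Theory.
Local Open Scope ring_scope.
Local Open Scope quotient_scope.
Local Open Scope classical_set_scope.

Notation Rreal := Rdefinitions.R.

Section NoetherianRing.
Variable R : comPzRingType.

Definition is_ideal (I : {pred R}) : Prop :=
  zmod_closed I /\ (forall a x, x \in I -> a * x \in I).

Definition noetherian_ring : Prop :=
  forall I : nat -> {pred R}, (forall n, is_ideal (I n)) ->
    (forall n, {subset I n <= I n.+1}) ->
    exists N, forall n, (N <= n)%N -> I n =i I N.
End NoetherianRing.

(* Subquotient modules B / (B ∩ C) of an R-module V, for submodules   *)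
(* B, C of V (when C ⊆ B this is the usual quotient B / C).            *)
Module SubQuot.
Section SubQuot.
Variables (R : pzRingType) (V : lmodType R) (B C : {pred V}).
Hypotheses (hB : submod_closed B) (hC : submod_closed C).

Lemma mem0 (S : {pred V}) : submod_closed S -> 0 \in S.
Proof. by case. Qed.
Lemma memD (S : {pred V}) u v : submod_closed S -> u \in S -> v \in S -> u + v \in S.
Proof. by case=> _ h Su Sv; have := h 1 u v Su Sv; rewrite scale1r. Qed.
Lemma memZ (S : {pred V}) a u : submod_closed S -> u \in S -> a *: u \in S.
Proof. by case=> S0 h Su; have := h a u 0 Su S0; rewrite addr0. Qed.
Lemma memN (S : {pred V}) u : submod_closed S -> u \in S -> - u \in S.
Proof. by move=> hS Su; rewrite -scaleN1r memZ. Qed.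
Lemma memB (S : {pred V}) u v : submod_closed S -> u \in S -> v \in S -> u - v \in S.
Proof. by move=> hS Su Sv; rewrite memD // memN. Qed.

Definition base : Type := let _ := hB in {x : V | x \in B}.

Definition zeroT : base := exist _ 0 (mem0 hB).
Definition addT (x y : base) : base :=
  exist _ (val x + val y) (memD hB (valP x) (valP y)).
Definition oppT (x : base) : base := exist _ (- val x) (memN hB (valP x)).
Definition scaleT (a : R) (x : base) : base :=
  exist _ (a *: val x) (memZ a hB (valP x)).

Definition equiv (x y : base) : bool := (val x - val y) \in C.

Lemma equiv_is_equiv : equiv_class_of equiv.
Proof.
split=> [x|x y|y x z]; rewrite /equiv ?subrr ?(mem0 hC) //.
  by apply/idP/idP => h; rewrite -opprB memN.
by move=> *; rewrite -[val x](addrNK (val y)) -addrA memD.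
Qed.

Canonical equiv_equiv := EquivRelPack equiv_is_equiv.
Canonical equiv_encModRel := defaultEncModRel equiv.

Definition quot := {eq_quot equiv}.
HB.instance Definition _ : EqQuotient base equiv quot := EqQuotient.on quot.
HB.instance Definition _ := Choice.on quot.

Lemma equivP x y : equiv x y = (x == y %[mod quot]).
Proof. by rewrite piE. Qed.

Lemma reprE x : val (repr (\pi_quot x)) - val x \in C.
Proof. by have := equivP (repr (\pi_quot x)) x; rewrite reprK eqxx. Qed.

Definition zero : quot := \pi zeroT.
Definition add := lift_op2 quot addT.
Definition opp := lift_op1 quot oppT.
Definition scale a := lift_op1 quot (scaleT a).

Lemma pi_opp x : \pi_quot (oppT x) = opp (\pi x).
Proof.
unlock opp; apply/eqP; rewrite -equivP /equiv /=.
by rewrite -opprD opprB; exact: reprE.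
Qed.

Lemma pi_add x y : \pi_quot (addT x y) = add (\pi x) (\pi y).
Proof.
unlock add; apply/eqP; rewrite -equivP /equiv /=.
have h := memD hC (reprE x) (reprE y).
by rewrite -opprB memN // opprD addrACA.
Qed.

Lemma pi_scale a x : \pi_quot (scaleT a x) = scale a (\pi x).
Proof.
unlock scale; apply/eqP; rewrite -equivP /equiv /=.
by rewrite -scalerBr memZ // -opprB memN // reprE.
Qed.

Lemma addqA : associative add.
Proof.
move=> x y z; rewrite -[x]reprK -[y]reprK -[z]reprK -!pi_add.
by congr \pi; apply: val_inj; rewrite /= addrA.
Qed.
Lemma addqC : commutative add.
Proof.
move=> x y; rewrite -[x]reprK -[y]reprK -!pi_add.
by congr \pi; apply: val_inj; rewrite /= addrC.
Qed.
Lemma add0q : left_id zero add.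
Proof.
move=> x; rewrite -[x]reprK /zero -!pi_add.
by congr \pi; apply: val_inj; rewrite /= add0r.
Qed.
Lemma addNq : left_inverse zero opp add.
Proof.
move=> x; rewrite -[x]reprK /zero -pi_opp -!pi_add.
by congr \pi; apply: val_inj; rewrite /= addNr.
Qed.

HB.instance Definition _ := GRing.isZmodule.Build quot addqA addqC add0q addNq.

Lemma addE (u v : quot) : u + v = add u v. Proof. by []. Qed.

Lemma scaleqA a b v : scale a (scale b v) = scale (a * b) v.
Proof.
rewrite -[v]reprK -!pi_scale.
by congr \pi; apply: val_inj; rewrite /= scalerA.
Qed.
Lemma scaleq1 : left_id 1 scale.
Proof.
move=> v; rewrite -[v]reprK -!pi_scale.
by congr \pi; apply: val_inj; rewrite /= scale1r.
Qed.
Lemma scaleqDr : right_distributive scale +%R.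
Proof.
move=> a x y; rewrite /= !addE -[x]reprK -[y]reprK -!pi_add -!pi_scale -pi_add.
by congr \pi; apply: val_inj; rewrite /= scalerDr.
Qed.
Lemma scaleqDl v : {morph scale^~ v : a b / a + b}.
Proof.
move=> a b; rewrite /= !addE -[v]reprK -!pi_scale -pi_add.
by congr \pi; apply: val_inj; rewrite /= scalerDl.
Qed.

HB.instance Definition _ :=
  GRing.Zmodule_isLmodule.Build R quot scaleqA scaleq1 scaleqDr scaleqDl.

(* class of v in B/(B ∩ C) if v \in B, and 0 otherwise *)
Definition cls (v : V) : quot := \pi_quot (insubd zeroT v : base).
Definition rep (u : quot) : V := val (repr u).

End SubQuot.
End SubQuot.
Export SubQuot.

Definition subquot (R : pzRingType) (V : lmodType R) (B C : {pred V})
  (hB : submod_closed B) (hC : submod_closed C) : lmodType R :=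
  @SubQuot.quot R V B C hB hC.

Lemma submod_closed0 (R : pzRingType) (V : lmodType R) :
  submod_closed [pred x : V | x == 0].
Proof.
split; first by rewrite inE.
by move=> a u v; rewrite !inE => /eqP-> /eqP->; rewrite scaler0 addr0.
Qed.

Definition fg_submodule (R : pzRingType) (N : lmodType R) (N' : {pred N}) : Prop :=
  exists s : seq N, forall v : N,
    v \in N' <-> exists c : 'I_(size s) -> R, v = \sum_(i < size s) c i *: s`_i.

Record length_function (R : pzRingType) := LengthFunction {
  lenf :> forall M : lmodType R, \bar Rreal;
  lenf_ge0 : forall M, (0 <= lenf M)%E;
  lenf0 : forall M : lmodType R, (forall x : M, x = 0) -> lenf M = 0%E;
  lenf_iso : forall (M N : lmodType R) (f : {linear M -> N}),
      bijective f -> lenf M = lenf N;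
  lenf_ses : forall (M1 M2 M3 : lmodType R)
      (f : {linear M1 -> M2}) (g : {linear M2 -> M3}),
      injective f -> (forall z, exists y, g y = z) ->
      (forall y, g y = 0 <-> exists x, f x = y) ->
      lenf M2 = (lenf M1 + lenf M3)%E;
  lenf_sup : forall N : lmodType R,
      lenf N = ereal_sup [set l | exists (N' : {pred N}) (hN' : submod_closed N'),
                 fg_submodule N' /\ l = lenf (subquot hN' (submod_closed0 N))]
}.

(* S-modules, S = R[x_1, ..., x_k], encoded as R-modules A with k     *)
(* pairwise commuting R-linear endomorphisms xs j (the action of x_j). *)
Section Filtration.
Variables (R : comPzRingType) (k : nat) (A : lmodType R).
Variable xs : 'I_k -> {linear A -> A}.

Definition commuting_ops : Prop :=
  forall i j (a : A), xs i (xs j a) = xs j (xs i a).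

(* filtration: increasing, exhaustive, x_j A_i ⊆ A_{i+1}; that each A_i is
   a submodule is the separate hypothesis hA below *)
Definition is_filtration (Af : nat -> {pred A}) : Prop :=
  [/\ forall i, {subset Af i <= Af i.+1},
      forall a : A, exists i, a \in Af i
    & forall i (j : 'I_k) a, a \in Af i -> xs j a \in Af i.+1].

Variables (Af : nat -> {pred A}) (hA : forall i, submod_closed (Af i)).

Definition gr (i : nat) : lmodType R := subquot (hA i.+1) (hA i).

Definition gr_x (j : 'I_k) (i : nat) (u : gr i) : gr i.+1 :=
  SubQuot.cls (hA i.+2) (hA i.+1) (xs j (SubQuot.rep u)).

(* elements of (the ambient product of) \tilde B(\bar A) = ⊕_i \tilde A_i *)
Definition grseq := forall i, gr i.

Definition fin_supp (g : grseq) : Prop := exists N, forall i, (N <= i)%N -> g i = 0.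

Definition grseq_x (j : 'I_k) (g : grseq) : grseq :=
  fun i => match i return gr i with 0 => 0 | i'.+1 => gr_x j (g i') end.

Definition gr_Ssubmodule (P : set grseq) : Prop :=
  [/\ forall g, P g -> fin_supp g,
      P (fun i => 0),
      forall g h, P g -> P h -> P (fun i => g i + h i),
      forall (a : R) g, P g -> P (fun i => a *: g i)
    & forall j g, P g -> P (grseq_x j g)].

Definition gr_noetherian : Prop :=
  forall P : nat -> set grseq, (forall n, gr_Ssubmodule (P n)) ->
    (forall n, P n `<=` P n.+1) -> exists N, forall n, (N <= n)%N -> P n = P N.

Definition lambda_inert (lam : length_function R) : Prop :=
  gr_noetherian /\ exists n0, forall n, (n0 <= n)%N -> (lam (gr n) < +oo)%E.

End Filtration.

(* Induction on k, proving more generally that lambda(B_n / C_n) is eventually a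
   polynomial of degree < k for any two families C_i <= B_i of submodules that are
   mapped into C_(i+1), B_(i+1) by every x_j and satisfy the ACC on graded
   S-submodules of (+)_i B_i / C_i; the theorem is the case B_i = A_(i+1), C_i = A_i.
   Multiplication by x := x_k gives an exact sequence
     0 -> K_n / C_n -> B_n / C_n -> B_(n+1) / C_(n+1) -> B_(n+1) / C'_(n+1) -> 0
   with K_n = B_n /\ x^-1 C_(n+1) and C'_(n+1) = C_(n+1) + x B_n. The two outer
   families are killed by x, so they satisfy the same hypotheses for x_1, ..., x_(k-1);
   by induction lambda(B_(n+1) / C_(n+1)) - lambda(B_n / C_n) is eventually a
   polynomial of degree < k - 1, and summing gives the claim. For k = 0 the ACC
   forces B_n = C_n for large n. *)
From HB Require Import structures.
From mathcomp Require Import all_boot all_algebra.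
From mathcomp Require Import classical_sets boolp reals constructive_ereal ereal.
From mathcomp Require Import Rstruct.
From mathcomp Require Import all_order generic_quotient ring.

Set Implicit Arguments.
Unset Strict Implicit.
Unset Printing Implicit Defensive.

Import GRing.Theory Num.Theory Order.TTheory.
Local Open Scope ring_scope.
Local Open Scope classical_set_scope.

Lemma mem_subrK (R : pzRingType) (V : lmodType R) (D : {pred V}) u v :
  submod_closed D -> u - v \in D -> v \in D -> u \in D.
Proof. by move=> hD uvD vD; rewrite -(subrK v u) SubQuot.memD. Qed.

Section Subquotient.
Variables (R : pzRingType) (V : lmodType R) (B C : {pred V}).
Hypotheses (hB : submod_closed B) (hC : submod_closed C).
Local Notation cls := (SubQuot.cls hB hC).
Local Notation rep := (@SubQuot.rep R V B C hB hC).
Local Open Scope quotient_scope.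

Lemma rep_mem (u : subquot hB hC) : rep u \in B.
Proof. exact: valP. Qed.

Lemma repK : cancel rep cls.
Proof. by move=> u; rewrite /SubQuot.cls /SubQuot.rep valKd reprK. Qed.

Lemma rep_cls v : v \in B -> rep (cls v) - v \in C.
Proof.
move=> vB; have := @SubQuot.reprE R V B C hB hC (insubd (SubQuot.zeroT hB) v).
by rewrite insubdK.
Qed.

Lemma eq_cls v w : v \in B -> w \in B -> cls v = cls w <-> v - w \in C.
Proof.
move=> vB wB; rewrite /SubQuot.cls.
by split=> [/eqP|h]; [|apply/eqP]; rewrite -SubQuot.equivP /SubQuot.equiv !insubdK.
Qed.

Lemma cls0 : cls 0 = 0.
Proof.
by rewrite /SubQuot.cls; congr \pi; apply: val_inj; rewrite insubdK // SubQuot.mem0.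
Qed.

Lemma clsD v w : v \in B -> w \in B -> cls (v + w) = cls v + cls w.
Proof.
move=> vB wB; rewrite [RHS]/GRing.add /= -SubQuot.pi_add /SubQuot.cls.
by congr \pi; apply: val_inj; rewrite /= !insubdK // SubQuot.memD.
Qed.

Lemma clsZ a v : v \in B -> cls (a *: v) = a *: cls v.
Proof.
move=> vB; rewrite [RHS]/GRing.scale /= -SubQuot.pi_scale /SubQuot.cls.
by congr \pi; apply: val_inj; rewrite /= !insubdK // SubQuot.memZ.
Qed.

Lemma cls_eq0 v : v \in B -> cls v = 0 <-> v \in C.
Proof. by move=> vB; rewrite -cls0 eq_cls ?subr0 // SubQuot.mem0. Qed.

Lemma subquot_eq0 (u : subquot hB hC) : u = 0 <-> rep u \in C.
Proof. by rewrite -{1}(repK u) cls_eq0 // rep_mem. Qed.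

Lemma rep0 : rep 0 \in C.
Proof. exact/subquot_eq0. Qed.

Lemma repD (u w : subquot hB hC) : rep (u + w) - (rep u + rep w) \in C.
Proof.
by apply/eq_cls; rewrite ?SubQuot.memD ?rep_mem // clsD ?rep_mem // !repK.
Qed.

Lemma repZ a (u : subquot hB hC) : rep (a *: u) - a *: rep u \in C.
Proof. by apply/eq_cls; rewrite ?SubQuot.memZ ?rep_mem // clsZ ?rep_mem // !repK. Qed.

End Subquotient.

Section SubquotientMap.
Variables (R : pzRingType) (V W : lmodType R) (phi : {linear V -> W}).
Variables (B C : {pred V}) (B' C' : {pred W}).
Hypotheses (hB : submod_closed B) (hC : submod_closed C).
Hypotheses (hB' : submod_closed B') (hC' : submod_closed C').
Hypotheses (phiB : forall v, v \in B -> phi v \in B')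
           (phiC : forall v, v \in C -> phi v \in C').

Definition subquot_map (u : subquot hB hC) : subquot hB' hC' :=
  SubQuot.cls hB' hC' (phi (SubQuot.rep u)).

Lemma subquot_map_cls v :
  v \in B -> subquot_map (SubQuot.cls hB hC v) = SubQuot.cls hB' hC' (phi v).
Proof.
move=> vB; apply/eq_cls; rewrite ?phiB ?rep_mem //.
by rewrite -linearB phiC // rep_cls.
Qed.

Lemma subquot_map_is_linear : linear subquot_map.
Proof.
move=> a u w; rewrite -(repK u) -(repK w).
have [uB wB] := (rep_mem u, rep_mem w).
rewrite -clsZ // -clsD ?SubQuot.memZ // !subquot_map_cls ?SubQuot.memD ?SubQuot.memZ //.
by rewrite linearP clsD ?clsZ ?SubQuot.memZ ?phiB.
Qed.

Definition subquot_linear : {linear subquot hB hC -> subquot hB' hC'} :=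
  HB.pack subquot_map (GRing.isLinear.Build _ _ _ _ subquot_map subquot_map_is_linear).

End SubquotientMap.

Lemma inj_surj_bijective (T U : Type) (f : T -> U) :
  injective f -> (forall z, exists y, f y = z) -> bijective f.
Proof.
move=> f_inj f_surj; exists (fun z => projT1 (cid (f_surj z))) => [x|z].
  by apply: f_inj; case: cid.
by case: cid.
Qed.

Section LengthOfSubquotients.
Variables (R : pzRingType) (lam : length_function R).

Section Chain.
Variables (V : lmodType R) (B D C : {pred V}).
Hypotheses (hB : submod_closed B) (hD : submod_closed D) (hC : submod_closed C).
Hypotheses (CD : {subset C <= D}) (DB : {subset D <= B}).

Lemma lenf_subquotD :
  lam (subquot hB hC) = (lam (subquot hD hC) + lam (subquot hB hD))%E.
Proof.
pose f := subquot_linear (phi := idfun) hD hC hB hC DB (fun v h => h).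
pose g := subquot_linear (phi := idfun) hB hC hB hD (fun v h => h) CD.
apply: (lenf_ses lam (f := f) (g := g)).
- move=> u w /eq_cls /= uw; rewrite -(repK u) -(repK w).
  by apply/eq_cls; rewrite ?rep_mem ?uw ?DB ?rep_mem.
- move=> z; exists (SubQuot.cls hB hC (SubQuot.rep z)).
  rewrite /= /subquot_map -[RHS]repK; apply/eq_cls; rewrite ?rep_mem //.
  by rewrite CD // rep_cls ?rep_mem.
- move=> y; split => [/cls_eq0 /= yD|[u <-]].
    have {}yD : SubQuot.rep y \in D by apply: yD; apply: rep_mem.
    exists (SubQuot.cls hD hC (SubQuot.rep y)).
    rewrite /= /subquot_map -[RHS]repK; apply/eq_cls; rewrite ?DB ?rep_mem //.
    exact: rep_cls.
  apply/cls_eq0; first exact: rep_mem.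
  apply: (mem_subrK hD (v := SubQuot.rep u)); last exact: rep_mem.
  by rewrite CD // rep_cls // DB // rep_mem.
Qed.

Lemma le_lenf_subquot_sub : (lam (subquot hD hC) <= lam (subquot hB hC))%E.
Proof. by rewrite lenf_subquotD leeDl // lenf_ge0. Qed.

Lemma le_lenf_subquot_quot : (lam (subquot hB hD) <= lam (subquot hB hC))%E.
Proof. by rewrite lenf_subquotD leeDr // lenf_ge0. Qed.

End Chain.

Lemma lenf_subquot_eq0 (V : lmodType R) (B C : {pred V}) (hB : submod_closed B)
    (hC : submod_closed C) :
  {subset B <= C} -> lam (subquot hB hC) = 0%E.
Proof. by move=> BC; apply: lenf0 => u; apply/subquot_eq0/BC/rep_mem. Qed.

Lemma lenf_subquot_image (V W : lmodType R) (phi : {linear V -> W}) (B K : {pred V})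
    (E C' : {pred W}) (hB : submod_closed B) (hK : submod_closed K)
    (hE : submod_closed E) (hC' : submod_closed C') :
  (forall v, v \in K = (v \in B) && (phi v \in C')) ->
  (forall w, w \in E <-> exists c b, [/\ c \in C', b \in B & w = c + phi b]) ->
  lam (subquot hB hK) = lam (subquot hE hC').
Proof.
move=> Kdef Edef.
have phiB v : v \in B -> phi v \in E.
  by move=> vB; apply/Edef; exists 0, v; rewrite add0r SubQuot.mem0.
have phiK v : v \in K -> phi v \in C' by rewrite Kdef => /andP[].
apply: (lenf_iso lam (f := subquot_linear hB hK hE hC' phiB phiK)).
apply: inj_surj_bijective => [u w /eq_cls /= uw|z].
  rewrite -(repK u) -(repK w); apply/eq_cls; rewrite ?rep_mem //.
  by rewrite Kdef linearB uw ?phiB ?rep_mem // SubQuot.memB ?rep_mem.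
have /Edef [c [b [cC bB ez]]] := rep_mem z.
exists (SubQuot.cls hB hK b); rewrite /= -[RHS]repK /subquot_map.
apply/eq_cls; rewrite ?phiB ?rep_mem // ez.
move: (rep_cls hB hK bB); rewrite Kdef linearB => /andP[_ h].
by rewrite opprD addrA addrAC SubQuot.memB.
Qed.

End LengthOfSubquotients.

Section DiscreteAntiderivative.
Variable F : numFieldType.

Lemma poly_antidiff k (p : {poly F}) : (size p <= k)%N ->
  exists Q : {poly F}, (size Q <= k.+1)%N /\ forall x, Q.[x + 1] - Q.[x] = p.[x].
Proof.
elim: k p => [|k IH] p sp.
  move: sp; rewrite size_poly_leq0 => /eqP ->.
  by exists 0; rewrite size_poly0; split=> // x; rewrite !horner0 subrr.
pose D : {poly F} := \poly_(i < k.+1) ('C(k.+1, i))%:R.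
have DE x : D.[x] = (x + 1) ^+ k.+1 - x ^+ k.+1.
  rewrite horner_poly exprD1n [in RHS]big_ord_recr /= binn mulr1n addrK.
  by apply: eq_bigr => i _; rewrite mulr_natl.
(* subtracting d * D kills the top coefficient of p, as lead_coef D = k.+1 *)
pose d := p`_k / (k.+1)%:R.
have [|Q [sQ QE]] := IH (p - d *: D).
  apply/leq_sizeP => j; rewrite leq_eqVlt coefB coefZ coef_poly => /orP[/eqP <-|kj].
    by rewrite ltnSn binSn /d mulfVK ?subrr ?pnatr_eq0.
  by rewrite ltnNge kj mulr0 subr0; apply/leq_sizeP: kj.
exists (Q + d *: 'X^(k.+1)); split.
  rewrite (leq_trans (size_polyD _ _)) // geq_max (leq_trans sQ) //=.
  by rewrite (leq_trans (size_scale_leq _ _)) // size_polyXn.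
move=> x; have := QE x; rewrite !hornerE DE => {}QE.
by rewrite -[p.[x]](subrK (d * ((x + 1) ^+ k.+1 - x ^+ k.+1))) -QE; ring.
Qed.

Lemma poly_of_diff k (p : {poly F}) (f : nat -> F) M : (size p <= k)%N ->
  (forall n, (M <= n)%N -> f n.+1 - f n = p.[n%:R]) ->
  exists q : {poly F}, (size q <= k.+1)%N /\ forall n, (M <= n)%N -> f n = q.[n%:R].
Proof.
move=> sp fE; have [Q [sQ QE]] := poly_antidiff sp.
exists (Q + (f M - Q.[M%:R])%:P); split.
  by rewrite (leq_trans (size_polyD _ _)) // geq_max sQ (leq_trans (size_polyC_leq1 _)).
move=> n /subnKC <-; rewrite hornerD hornerC; elim: (n - M)%N => [|m IHm].
  by rewrite addn0 addrC subrK.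
by rewrite addnS -[f _](subrK (f (M + m)%N)) fE ?leq_addr // IHm -QE -natr1; ring.
Qed.

End DiscreteAntiderivative.

Definition eventually_polynomial (k : nat) (f : nat -> \bar Rreal) : Prop :=
  exists q : {poly Rreal}, (size q <= k)%N /\
    exists N, forall n, (N <= n)%N -> f n = (q.[n%:R])%:E.

Lemma eventually_polynomial_of_diff k (f g h : nat -> \bar Rreal) :
  (forall n, f n + g n.+1 = h n + f n.+1)%E ->
  (forall n, 0 <= f n)%E -> (exists n0, forall n, (n0 <= n)%N -> f n < +oo)%E ->
  eventually_polynomial k g -> eventually_polynomial k h ->
  eventually_polynomial k.+1 f.
Proof.
move=> fgh f_ge0 [n0 f_fin] [qg [sqg [Ng gE]]] [qh [sqh [Nh hE]]].
pose M := maxn n0 (maxn Ng Nh).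
have [n0M NgM NhM] : [/\ n0 <= M, Ng <= M & Nh <= M]%N.
  by rewrite !leq_max !leqnn !orbT.
have fE n : (M <= n)%N -> f n = (fine (f n))%:E.
  by move=> Mn; rewrite fineK // ge0_fin_numE ?f_fin // (leq_trans n0M).
pose p := qg \Po ('X + 1) - qh.
have sp : (size p <= k)%N.
  rewrite (leq_trans (size_polyD _ _)) // size_polyN size_comp_poly2 ?size_XaddC //.
  by rewrite geq_max sqg.
have diffE n : (M <= n)%N -> fine (f n.+1) - fine (f n) = p.[n%:R].
  move=> Mn; have := fgh n.
  rewrite (fE n Mn) (fE n.+1 (leqW Mn)) gE ?(leq_trans NgM (leqW Mn)) //.
  rewrite hE ?(leq_trans NhM Mn) // -!EFinD /= => -[fghE].
  rewrite hornerD hornerN horner_comp hornerD hornerX hornerC natr1.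
  have -> : fine (f n.+1) = fine (f n) + qg.[n.+1%:R] - qh.[n%:R].
    by rewrite fghE addrAC subrr add0r.
  by ring.
have [q [sq qE]] := poly_of_diff sp diffE.
by exists q; split=> //; exists M => n Mn; rewrite fE // qE.
Qed.

Section LayeredFamilies.
Variables (R : pzRingType) (A : lmodType R).

Definition graded_stable k (xs : 'I_k -> {linear A -> A}) (D : nat -> {pred A}) :
    Prop :=
  forall i j a, a \in D i -> xs j a \in D i.+1.

(* The ACC on graded S-submodules of the direct sum of the B_i / C_i, each such
   submodule being given by its preimages C_i <= D_i <= B_i. *)
Definition graded_acc k (xs : 'I_k -> {linear A -> A}) (B C : nat -> {pred A}) : Prop :=
  forall Dn : nat -> nat -> {pred A}, (forall n i, submod_closed (Dn n i)) ->
  (forall n i, {subset C i <= Dn n i}) -> (forall n i, {subset Dn n i <= B i}) ->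
  (forall n, graded_stable xs (Dn n)) -> (forall n i, {subset Dn n i <= Dn n.+1 i}) ->
  exists N, forall n, (N <= n)%N -> forall i, Dn n i =i Dn N i.

Definition layered k (xs : 'I_k -> {linear A -> A}) (B C : nat -> {pred A}) : Prop :=
  [/\ forall i, {subset C i <= B i}, graded_stable xs B, graded_stable xs C
    & graded_acc xs B C].

Lemma layered0_eventually_sub (xs : 'I_0 -> {linear A -> A}) (B C : nat -> {pred A}) :
  (forall i, submod_closed (B i)) -> (forall i, submod_closed (C i)) ->
  layered xs B C -> exists N, forall n, (N <= n)%N -> {subset B n <= C n}.
Proof.
move=> hB hC [CB _ _ acc].
pose Dn n i := if (i < n)%N then B i else C i.
have [N DnE] : exists N, forall n, (N <= n)%N -> forall i, Dn n i =i Dn N i.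
  apply: acc => [n i|n i v|n i v|n i []//|n i v].
  - by rewrite /Dn; case: ifP.
  - by rewrite /Dn; case: ifP => // _; apply: CB.
  - by rewrite /Dn; case: ifP => // _; apply: CB.
  rewrite /Dn; case: (ltnP i n) => [/ltnW|_]; first by rewrite ltnS => ->.
  by case: ifP => // _; apply: CB.
exists N => n Nn v vB; have := DnE n.+1 (leqW Nn) n v.
by rewrite /Dn ltnSn ltnNge Nn /= => <-.
Qed.

Lemma graded_acc_restrict k (xs : 'I_k.+1 -> {linear A -> A})
    (B C B' C' : nat -> {pred A}) :
  (forall i, {subset C i <= C' i}) -> (forall i, {subset B' i <= B i}) ->
  (forall i a, a \in B' i -> xs ord_max a \in C' i.+1) ->
  graded_acc xs B C -> graded_acc (fun j : 'I_k => xs (lift ord_max j)) B' C'.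
Proof.
move=> CC' B'B xB' acc Dn hD C'D DB' Dstable Dmono.
apply: acc => // [n i v /CC' /C'D | n i v /DB' /B'B | n i j a aD] //.
case: (unliftP ord_max j) => [j' ->|->]; first exact: Dstable.
exact/C'D/xB'/(DB' n).
Qed.

Section KernelCokernel.
Variables (k : nat) (xs : 'I_k.+1 -> {linear A -> A}) (B C : nat -> {pred A}).
Hypothesis xs_comm : forall i j a, xs i (xs j a) = xs j (xs i a).
Hypotheses (hB : forall i, submod_closed (B i)) (hC : forall i, submod_closed (C i)).
Hypothesis BC : layered xs B C.

Local Notation x := (xs ord_max).
Local Notation xs' := (fun j : 'I_k => xs (lift ord_max j)).

Definition ker_layer i : {pred A} := [pred v | (v \in B i) && (x v \in C i.+1)].

Definition coker_layer i : {pred A} :=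
  if i is i'.+1 then
    [pred w | `[< exists c b, [/\ c \in C i, b \in B i' & w = c + x b] >]]
  else C 0.

Lemma coker_layerSP i w :
  w \in coker_layer i.+1 <-> exists c b, [/\ c \in C i.+1, b \in B i & w = c + x b].
Proof. by rewrite /coker_layer inE. Qed.

Lemma ker_layer_submod i : submod_closed (ker_layer i).
Proof.
split=> [|a u v]; rewrite !inE ?linear0 ?SubQuot.mem0 //.
move=> /andP[uB xuC] /andP[vB xvC].
by rewrite linearP !(SubQuot.memD, SubQuot.memZ).
Qed.

Lemma coker_layer_submod i : submod_closed (coker_layer i).
Proof.
case: i => [|i]; first exact: hC.
split=> [|a u v /coker_layerSP[c [b [cC bB ->]]] /coker_layerSP[c' [b' [cC' bB' ->]]]].
  by apply/coker_layerSP; exists 0, 0; rewrite linear0 addr0 !SubQuot.mem0.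
apply/coker_layerSP; exists (a *: c + c'), (a *: b + b').
by rewrite linearP scalerDr addrACA !(SubQuot.memD, SubQuot.memZ).
Qed.

Lemma sub_ker_layer i : {subset C i <= ker_layer i}.
Proof. by have [CB _ Cst _] := BC; move=> v vC; rewrite inE CB //= Cst. Qed.

Lemma ker_layer_sub i : {subset ker_layer i <= B i}.
Proof. by move=> v /andP[]. Qed.

Lemma sub_coker_layer i : {subset C i <= coker_layer i}.
Proof.
case: i => [|i] v vC //; apply/coker_layerSP.
by exists v, 0; rewrite linear0 addr0 SubQuot.mem0.
Qed.

Lemma coker_layer_sub i : {subset coker_layer i <= B i}.
Proof.
have [CB Bst _ _] := BC; case: i => [|i] v; first exact: CB.
move=> /coker_layerSP[c [b [cC bB ->]]].
by apply: SubQuot.memD; [exact: hB | exact: CB | exact: Bst].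
Qed.

Lemma layered_ker : layered xs' ker_layer C.
Proof.
have [CB Bst Cst acc] := BC.
split=> [|i j a|i j a aC|]; first exact: sub_ker_layer.
- by rewrite !inE => /andP[aB xaC]; rewrite Bst //= xs_comm Cst.
- exact: Cst.
apply: graded_acc_restrict acc => [i v //|i|i a /andP[] //]; exact: ker_layer_sub.
Qed.

Lemma layered_coker : layered xs' B coker_layer.
Proof.
have [CB Bst Cst acc] := BC.
split=> [|i j a|[|i] j a|]; first exact: coker_layer_sub.
- exact: Bst.
- move=> aC; apply/coker_layerSP.
  by exists (xs (lift ord_max j) a), 0; rewrite linear0 addr0 Cst // SubQuot.mem0.
- move=> /coker_layerSP[c [b [cC bB ->]]]; apply/coker_layerSP.
  exists (xs (lift ord_max j) c), (xs (lift ord_max j) b).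
  by rewrite linearD xs_comm Cst ?Bst.
apply: graded_acc_restrict acc => [i|i v //|i a aB]; first exact: sub_coker_layer.
by apply/coker_layerSP; exists 0, a; rewrite add0r SubQuot.mem0.
Qed.

(* Multiplication by x maps B_n / K_n isomorphically onto C'_(n+1) / C_(n+1). *)
Lemma lenf_ker_coker (lam : length_function R) n :
  (lam (subquot (hB n) (hC n)) + lam (subquot (hB n.+1) (coker_layer_submod n.+1)))%E =
  (lam (subquot (ker_layer_submod n) (hC n)) + lam (subquot (hB n.+1) (hC n.+1)))%E.
Proof.
rewrite (lenf_subquotD lam _ (ker_layer_submod n) _
  (@sub_ker_layer n) (@ker_layer_sub n)).
rewrite (lenf_subquotD lam _ (coker_layer_submod n.+1) _
  (@sub_coker_layer n.+1) (@coker_layer_sub n.+1)).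
rewrite (lenf_subquot_image lam (phi := x) (hB n) (ker_layer_submod n)
  (coker_layer_submod n.+1) (hC n.+1) (fun v => erefl) (@coker_layerSP n)).
by rewrite addeA.
Qed.

End KernelCokernel.

Theorem layered_length_polynomial (lam : length_function R) k
    (xs : 'I_k -> {linear A -> A}) : (forall i j a, xs i (xs j a) = xs j (xs i a)) ->
  forall (B C : nat -> {pred A}) (hB : forall i, submod_closed (B i))
    (hC : forall i, submod_closed (C i)),
  layered xs B C ->
  (exists n0, forall n, (n0 <= n)%N -> lam (subquot (hB n) (hC n)) < +oo)%E ->
  eventually_polynomial k (fun n => lam (subquot (hB n) (hC n))).
Proof.
elim: k xs => [|k IH] xs xs_comm B C hB hC BC [n0 fin].
  have [N BCN] := layered0_eventually_sub hB hC BC.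
  exists 0; split; first by rewrite size_poly0.
  by exists N => n Nn; rewrite horner0 lenf_subquot_eq0 //; apply: BCN.
have xs'_comm (i j : 'I_k) a : xs (lift ord_max i) (xs (lift ord_max j) a) =
    xs (lift ord_max j) (xs (lift ord_max i) a) by apply: xs_comm.
apply: (eventually_polynomial_of_diff
  (g := fun n => lam (subquot (hB n) (coker_layer_submod xs hB hC n)))
  (h := fun n => lam (subquot (ker_layer_submod xs hB hC n) (hC n)))
  (lenf_ker_coker hB hC BC lam)).
- by move=> n; apply: lenf_ge0.
- by exists n0.
- apply: (IH _ xs'_comm _ _ hB _ (layered_coker xs_comm hB hC BC)).
  exists n0 => n /fin; apply: le_lt_trans; apply: le_lenf_subquot_quot.
    exact: sub_coker_layer.
  exact: coker_layer_sub.
apply: (IH _ xs'_comm _ _ _ hC (layered_ker xs_comm BC)).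
exists n0 => n /fin; apply: le_lt_trans; apply: le_lenf_subquot_sub.
  exact: sub_ker_layer.
exact: ker_layer_sub.
Qed.

End LayeredFamilies.

Section GradedSubmodules.
Variables (R : comPzRingType) (k : nat) (A : lmodType R) (xs : 'I_k -> {linear A -> A}).
Variables (Af : nat -> {pred A}) (hA : forall i, submod_closed (Af i)).
Hypothesis Af_stable : graded_stable xs Af.

Definition graded_submodule (D : nat -> {pred A}) : set (grseq hA) :=
  fun g => fin_supp g /\ forall i, SubQuot.rep (g i) \in D i.

Variables (D D' : nat -> {pred A}).
Hypotheses (hD : forall i, submod_closed (D i)) (hD' : forall i, submod_closed (D' i)).
Hypotheses (AD : forall i, {subset Af i <= D i})
           (AD' : forall i, {subset Af i <= D' i}).

Lemma graded_submodule_Ssubmodule :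
  graded_stable xs D -> gr_Ssubmodule xs (graded_submodule D).
Proof.
move=> Dst; split=> [g []//|||a g [[N gN] gD]|j g [[N gN] gD]].
- by split=> [|i]; [exists 0%N | apply/AD/rep0].
- move=> g h [[Ng gN] gD] [[Nh hN] hDh]; split.
    by exists (maxn Ng Nh) => i; rewrite geq_max => /andP[/gN -> /hN ->]; rewrite addr0.
  move=> i /=; apply: (mem_subrK (hD i) (AD (repD (g i) (h i)))).
  by rewrite SubQuot.memD.
- split=> [|i]; first by exists N => i /gN ->; rewrite scaler0.
  rewrite /=; apply: (mem_subrK (hD i) (AD (repZ a (g i)))).
  by rewrite SubQuot.memZ.
split=> [|[|i] /=]; last 2 first.
- exact/AD/rep0.
- have xgA : xs j (SubQuot.rep (g i)) \in Af i.+2 by apply/Af_stable/rep_mem.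
  by apply: (mem_subrK (hD i.+1) (AD (rep_cls (hA i.+2) (hA i.+1) xgA))); apply/Dst.
exists N.+1 => -[//|i /gN /= gi].
by rewrite /gr_x gi; apply/cls_eq0; apply/Af_stable; rewrite ?rep_mem ?rep0.
Qed.

Lemma graded_submodule_subset :
  (forall i, {subset D i <= D' i}) -> graded_submodule D `<=` graded_submodule D'.
Proof. by move=> DD' g [gfin gD]; split=> // i; apply/DD'/gD. Qed.

Lemma graded_submodule_subset_inv : (forall i, {subset D i <= Af i.+1}) ->
  graded_submodule D `<=` graded_submodule D' -> forall i, {subset D i <= D' i}.
Proof.
move=> DA DD' i v vD; have vA := DA _ _ vD.
pose g : grseq hA := fun l => if l == i then SubQuot.cls (hA l.+1) (hA l) v else 0.
have gD : graded_submodule D g.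
  split=> [|l]; first by exists i.+1 => l; rewrite /g; case: eqP => // ->; rewrite ltnn.
  rewrite /g; case: eqP => [->|_]; last exact/AD/rep0.
  exact: (mem_subrK (hD i) (AD (rep_cls (hA i.+1) (hA i) vA))).
have [_ /(_ i)] := DD' g gD; rewrite /g eqxx => gD'.
apply: (mem_subrK (hD' i) _ gD'); apply: AD'.
by rewrite -opprB SubQuot.memN // rep_cls.
Qed.

End GradedSubmodules.

Lemma gr_noetherian_graded_acc (R : comPzRingType) k (A : lmodType R)
    (xs : 'I_k -> {linear A -> A}) (Af : nat -> {pred A})
    (hA : forall i, submod_closed (Af i)) :
  graded_stable xs Af -> gr_noetherian xs hA -> graded_acc xs (fun i => Af i.+1) Af.
Proof.
move=> Af_stable noeth Dn hD AD DA Dst Dmono.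
have [N DnN] := noeth (fun n => graded_submodule (Dn n))
  (fun n => graded_submodule_Ssubmodule hA Af_stable (hD n) (AD n) (Dst n))
  (fun n => graded_submodule_subset (Dmono n)).
exists N => n Nn i v; have DnE := DnN n Nn.
by apply/idP/idP; apply: graded_submodule_subset_inv => //; rewrite DnE.
Qed.

Theorem proposition11p2 (R : comPzRingType) (hR : noetherian_ring R)
    (lam : length_function R) (k : nat) (A : lmodType R)
    (xs : 'I_k -> {linear A -> A}) (hxs : commuting_ops xs)
    (Af : nat -> {pred A}) (hA : forall i, submod_closed (Af i))
    (hfil : is_filtration xs Af) (hinert : lambda_inert xs hA lam) :
  exists q : {poly Rdefinitions.R}, (size q <= k)%N /\
    exists N : nat, forall n : nat, (N <= n)%N ->
      lam (gr hA n) = (q.[n%:R])%:E.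
Proof.
have [Af_sub _ Af_stable] := hfil.
have [noeth fin] := hinert.
have BC : layered xs (fun i => Af i.+1) Af.
  by split=> // [i j a /Af_stable //|]; apply: gr_noetherian_graded_acc.
exact: (layered_length_polynomial hxs BC fin).
Qed.
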